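(* Let $(\Omega,\mathcal{F},P)$ be an essentially purely $P$-atomic probability space and $(E,\mathcal P)$ a random locally convex module over $K$ with base $(\Omega,\mathcal F,P)$, and let $f:E\to L^0(\mathcal F,K)$ be a module homomorphism. Then $f\in E^\ast_{min}$ (i.e. $f$ is continuous from $(E,\mathcal T_{\varepsilon,\lambda})$ to $(L^0(\mathcal F,K),\mathcal T_c)$) if and only if there exist finitely many $P$-atoms $A_1,\dots,A_n$, elements $\xi_1,\dots,\xi_n\in L^0_+$ and $\mathcal Q_1,\dots,\mathcal Q_n\in\mathcal F(\mathcal P)$ such that $$|f(x)|\le\sum_{i=1}^{n}\tilde I_{A_i}\,\xi_i\,\|x\|_{\mathcal Q_i}\quad\text{for all }x\in E.$$
   Context: $(\Omega,\mathcal{F},P)$ is a probability space, $K=\mathbb{R}$ or $\mathbb{C}$, $L^{0}(\mathcal{F},K)$ is the algebra of equivalence classes (mod a.s. equality) of $K$-valued measurable random variables, ordered a.s.; $L^0_+$ the nonnegative ones, $L^0_{++}$ those $>0$ a.s.; $\tilde I_A$ is the class of the indicator of $A$. An $L^0$-seminorm on a left $L^0(\mathcal F,K)$-module $E$ is $\|\cdot\|:E\to L^0_+$ with $\|x+y\|\le\|x\|+\|y\|$ and $\|\xi x\|=|\xi|\|x\|$. A random locally convex module $(E,\mathcal P)$ is a left $L^0(\mathcal F,K)$-module with a family $\mathcal P$ of $L^0$-seminorms such that $\bigvee_{\|\cdot\|\in\mathcal P}\|x\|=0$ implies $x=0$. $\mathcal F(\mathcal P)$ is the set of finite subfamilies of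 $\mathcal P$, and $\|x\|_{\mathcal Q}=\bigvee_{\|\cdot\|\in\mathcal Q}\|x\|$. $\mathcal T_{\varepsilon,\lambda}$ on $E$ has local base at $0$ the sets $\{x:P\{\omega:\|x\|_{\mathcal Q}(\omega)<\varepsilon\}>1-\lambda\}$ ($\mathcal Q\in\mathcal F(\mathcal P)$, $\varepsilon>0$, $0<\lambda<1$). $\mathcal T_c$ on $E$: $G$ open iff for each $x\in G$ there are $\mathcal Q\in\mathcal F(\mathcal P)$, $\varepsilon\in L^0_{++}$ with $x+\{y:\|y\|_{\mathcal Q}\le\varepsilon\}\subset G$. $L^0(\mathcal F,K)$ is regarded as a random locally convex module with $\mathcal P=\{|\cdot|\}$. A $P$-atom is $A\in\mathcal F$ with $P(A)>0$ such that every measurable $B\subset A$ has $P(B)=0$ or $P(A\setminus B)=0$. $(\Omega,\mathcal F,P)$ is essentially purely $P$-atomic if there is an at most countable family $\{A_n\}$ of disjoint atoms with $\Omega=\bigcup_n A_n$ such that every $A\in\mathcal F$ differs by a null set from some set in the $\sigma$-algebra generated by $\{A_n\}$. *)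

From HB Require Import structures.
From mathcomp Require Import all_boot all_order all_algebra.
From mathcomp Require Import all_classical all_reals all_analysis.
From mathcomp Require Import complex.

Set Implicit Arguments.
Unset Strict Implicit.
Unset Printing Implicit Defensive.

Import Order.TTheory GRing.Theory Num.Theory.
Local Open Scope classical_set_scope.
Local Open Scope ring_scope.

Section ProbSpace.
Context (d : measure_display) (T : measurableType d) (R : realType)
        (P : probability T R).

Definition P_atom (A : set T) : Prop :=
  measurable A /\ (0 < P A)%E /\
  forall B, measurable B -> B `<=` A -> P B = 0%E \/ P (A `\` B) = 0%E.

(* Essentially purely P-atomic: an at most countable family of pairwise
   disjoint atoms (indexed by S : set nat) covering Omega, such that every
   measurable set differs by a null set from a set of the sigma-algebra
   generated by the family. *)
Definition essentially_purely_atomic : Prop :=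
  exists (S : set nat) (A : nat -> set T),
    (forall n, S n -> P_atom (A n)) /\
    (forall n m, S n -> S m -> n <> m -> A n `&` A m = set0) /\
    \bigcup_(n in S) A n = setT /\
    forall B, measurable B ->
      exists C, (<<s [set A n | n in S] >>) C /\
                P ((B `\` C) `|` (C `\` B)) = 0%E.

Definition ae_eq (V : Type) (f g : T -> V) : Prop :=
  {ae P, forall w, f w = g w}.

Definition ae_le (f g : T -> R) : Prop := {ae P, forall w, f w <= g w}.

(*  The scalar field K comes with its modulus [kabs : K -> R] and the       *)
(*  notion [kmeas] of (Borel) measurability of K-valued functions.  An      *)
(*  element of L^0(F,K) is represented by a kmeas-measurable function       *)
(*  T -> K, equality in L^0 being a.s. equality.                            *)
Section RLCM.
Context (K : comNzRingType) (kabs : K -> R) (kmeas : (T -> K) -> Prop).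

(* A left L^0(F,K)-module structure on the additive group E: the action
   [scale] of (representatives of) L^0 elements, which only depends on the
   a.s. class of the scalar. *)
Record L0_module (E : zmodType) := L0Module {
  scale : (T -> K) -> E -> E;
  scale_ae : forall xi eta x, kmeas xi -> kmeas eta -> ae_eq xi eta ->
     scale xi x = scale eta x;
  scale1 : forall x, scale (fun _ => 1) x = x;
  scaleDr : forall xi x y, kmeas xi -> scale xi (x + y) = scale xi x + scale xi y;
  scaleDl : forall xi eta x, kmeas xi -> kmeas eta ->
     scale (xi \+ eta) x = scale xi x + scale eta x;
  scaleA : forall xi eta x, kmeas xi -> kmeas eta ->
     scale (xi \* eta) x = scale xi (scale eta x)
}.

(* An L^0-seminorm E -> L^0_+(F) (values are represented by measurable
   real functions, nonnegative a.s.). *)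
Definition L0_seminorm (E : zmodType) (M : L0_module E) (nrm : E -> T -> R)
  : Prop :=
  (forall x, measurable_fun setT (nrm x)) /\
  (forall x, ae_le (fun _ => 0) (nrm x)) /\
  (forall x y, ae_le (nrm (x + y)) (nrm x \+ nrm y)) /\
  (forall xi x, kmeas xi ->
     ae_eq (nrm (scale M xi x)) (fun w => kabs (xi w) * nrm x w)).

(* A random locally convex module (E, calP): the family calP of
   L^0-seminorms is indexed by the type I. *)
Record RLC_module (E : zmodType) := RLCModule {
  rlc_mod : L0_module E;
  rlc_idx : Type;
  rlc_nrm : rlc_idx -> E -> T -> R;
  rlc_seminorm : forall i, L0_seminorm rlc_mod (rlc_nrm i);
  rlc_sep : forall x, (forall i, ae_eq (rlc_nrm i x) (fun _ => 0)) -> x = 0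
}.

(* ||x||_Q for a finite subfamily Q of calP (a finite list of indices):
   the pointwise maximum (the empty family gives 0; since seminorms are
   a.s. nonnegative this is a representative of the L^0 supremum). *)
Definition nrmQ (E : zmodType) (M : RLC_module E) (Q : seq (rlc_idx M))
  (x : E) : T -> R :=
  fun w => \big[Num.max/0]_(i <- Q) rlc_nrm i x w.

Definition Teps_open (E : zmodType) (M : RLC_module E) (G : set E) : Prop :=
  forall x, G x -> exists (Q : seq (rlc_idx M)) (eps lam : R),
    0 < eps /\ 0 < lam < 1 /\
    forall y, ((1 - lam)%:E < P [set w | (nrmQ Q y w < eps)%R])%E -> G (x + y).

(* Open sets of the locally L^0-convex topology T_c on L^0(F,K), where
   L^0(F,K) carries the single L^0-seminorm |.|.  A set of L^0 elements is
   given by a predicate on representatives. *)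
Definition Tc_open (G : set (T -> K)) : Prop :=
  forall x, kmeas x -> G x -> exists eps : T -> R,
    measurable_fun setT eps /\ {ae P, forall w, 0 < eps w} /\
    forall y, kmeas y -> ae_le (fun w => kabs (y w)) eps -> G (x \+ y).

Definition L0_module_hom (E : zmodType) (M : L0_module E) (f : E -> T -> K)
  : Prop :=
  (forall x, kmeas (f x)) /\
  (forall x y, ae_eq (f (x + y)) (f x \+ f y)) /\
  (forall xi x, kmeas xi -> ae_eq (f (scale M xi x)) (xi \* f x)).

Definition in_dual_min (E : zmodType) (M : RLC_module E) (f : E -> T -> K)
  : Prop :=
  forall G, Tc_open G -> Teps_open M [set x | G (f x)].

Definition lemma3p7_stmt : Prop :=
  essentially_purely_atomic ->
  forall (E : zmodType) (M : RLC_module E) (f : E -> T -> K),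
    L0_module_hom (rlc_mod M) f ->
    (in_dual_min M f <->
     exists (n : nat) (A : 'I_n -> set T) (xi : 'I_n -> T -> R)
            (Q : 'I_n -> seq (rlc_idx M)),
       (forall i, P_atom (A i)) /\
       (forall i, measurable_fun setT (xi i) /\ ae_le (fun _ => 0) (xi i)) /\
       forall x, ae_le (fun w => kabs (f x w))
         (fun w => \sum_(i < n) \1_(A i) w * xi i w * nrmQ (Q i) x w)).

End RLCM.
End ProbSpace.

Definition Rabs_K (R : realType) (z : R) : R := `|z|.
Definition Rmeas_K d (T : measurableType d) (R : realType) (f : T -> R) : Prop :=
  measurable_fun setT f.

Definition Cabs_K (R : realType) (z : R[i]) : R :=
  Num.sqrt (complex.Re z ^+ 2 + complex.Im z ^+ 2).
(* Borel measurability of a C-valued function (C = R^2): real and imaginary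
   parts measurable. *)
Definition Cmeas_K d (T : measurableType d) (R : realType) (f : T -> R[i])
  : Prop :=
  measurable_fun setT (fun w => complex.Re (f w)) /\
  measurable_fun setT (fun w => complex.Im (f w)).

(* If |f x| <= sum_i 1_{A_i} xi_i ||x||_{Q_i}, then on each atom A_i the
   measurable function xi_i / eps is a.s. bounded by a constant, and an event
   whose complement is smaller than P(A_i) contains A_i almost surely; hence
   P(||y||_Q < delta) > 1 - lambda forces |f y| <= eps a.s., for suitable
   Q, delta and lambda depending only on finitely many constants.
   Conversely, continuity at 0 gives Q, eps, lambda such that
   P(||y||_Q < eps) > 1 - lambda implies |f y| < 1 a.s.  Finitely many atoms
   already cover a set U with P(U) > 1 - lambda.  Scaling x by
   eps / (2 ||x||_Q) on U and by 2 / |f x| off U keeps ||y||_Q < eps on U, so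
   |f y| < 1 a.s., which reads |f x| <= (2 / eps) 1_U ||x||_Q. *)

From HB Require Import structures.
From mathcomp Require Import all_boot all_order all_algebra.
From mathcomp Require Import all_classical all_reals all_analysis.
From mathcomp Require Import complex.
From mathcomp Require Import measurable_realfun.
From mathcomp Require Import lra.
Import Order.TTheory GRing.Theory Num.Theory.
Local Open Scope classical_set_scope.
Local Open Scope ring_scope.

Section measurable_comparison.
Context {d : measure_display} {T : measurableType d} {R : realType}.
Variables (f g : T -> R).
Hypotheses (mf : measurable_fun setT f) (mg : measurable_fun setT g).

Lemma measurable_set_ltr : measurable [set w | f w < g w].
Proof.
have mtrue : measurable [set true] by [].
by have := measurable_fun_ltr mf mg measurableT mtrue; rewrite setTI.
Qed.

Lemma measurable_set_ler : measurable [set w | f w <= g w].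
Proof.
have mtrue : measurable [set true] by [].
by have := measurable_fun_ler mf mg measurableT mtrue; rewrite setTI.
Qed.

End measurable_comparison.

Lemma finite_pos_lbound {R : realFieldType} {n : nat} {c : 'I_n -> R} :
  (forall i, 0 < c i) -> exists2 m : R, 0 < m < 1 & forall i, m <= c i.
Proof.
move=> c_gt0; pose s := \sum_i (c i)^-1.
have s_ge0 : 0 <= s by apply: sumr_ge0 => i _; rewrite invr_ge0 ltW.
exists (2 + s)^-1 => [|i].
  rewrite invr_gt0 invf_lt1; last lra.
  by apply/andP; split; lra.
rewrite -[c i]invrK lef_pV2 ?posrE ?invr_gt0 //; last lra.
rewrite /s (bigD1 i) //=; suff : 0 <= \sum_(j | j != i) (c j)^-1 by lra.
by apply: sumr_ge0 => j _; rewrite invr_ge0 ltW.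
Qed.

Lemma measurable_fun_inv (R : realType) : measurable_fun setT (@GRing.inv R).
Proof.
have -> : @GRing.inv R = fun x => if x == 0 then 0 else x^-1.
  by apply/funext => x; case: eqP => // ->; rewrite invr0.
apply: measurable_fun_if => //; first exact: measurable_fun_eqr.
rewrite (_ : _ `&` _ = [set x | x != 0]).
  apply: open_continuous_measurable_fun; first exact: open_neq.
  by move=> x; rewrite inE => /inv_continuous.
by apply/seteqP; split => x /=; [case=> _ ->|move=> /negbTE ->].
Qed.

Lemma measurable_fun_mem d (T : measurableType d) (U : set T) :
  measurable U -> measurable_fun setT (fun w => w \in U).
Proof.
move=> mU; apply: (measurable_fun_bool true); rewrite setTI.
rewrite (_ : _ @^-1` _ = U) //.
by apply/seteqP; split => w /=; [exact: set_mem|exact: mem_set].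
Qed.

Lemma indic_bigcup_le_sum (T : Type) (R : realDomainType) (F : nat -> set T)
  (s : seq nat) (w : T) :
  \1_(\bigcup_(k in [set` s]) F k) w
    <= \sum_(i < size s) \1_(F (nth 0 s i)) w :> R.
Proof.
have sum_ge0 : 0 <= \sum_(i < size s) \1_(F (nth 0 s i)) w :> R.
  by apply: sumr_ge0 => i _; rewrite indicE ler0n.
rewrite indicE; case: (boolP (w \in _)) => [/set_mem [k /= ks Fk]|_] //.
have ks_idx : (index k s < size s)%N by rewrite index_mem.
rewrite (bigD1 (Ordinal ks_idx)) //=.
rewrite nth_index // indicE mem_set //= lerDl.
by apply: sumr_ge0 => i _; rewrite indicE ler0n.
Qed.

Section atoms.
Context {d : measure_display} {T : measurableType d} {R : realType}.
Context {P : probability T R}.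

Lemma ae_le_measure {A B : set T} : measurable A -> measurable B ->
  {ae P, forall w, A w -> B w} -> (P A <= P B)%E.
Proof.
move=> mA mB [N [mN PN0 sN]].
have AB : A `<=` B `|` N.
  move=> w Aw; case: (pselect (B w)) => Bw; first by left.
  by right; apply: sN => /(_ Aw).
apply: (le_trans (le_measure _ _ _ AB)); rewrite ?inE //.
  exact: measurableU.
apply: (le_trans (measureU2 _ _ _)) => //.
by rewrite [X in (_ + X <= _)%E](_ : _ = 0%E) ?adde0.
Qed.

Lemma ae_notin_null {A : set T} : measurable A -> P A = 0%E ->
  {ae P, forall w, ~ A w}.
Proof. by move=> mA PA0; exists A; split => // w /= /contrapT. Qed.

Lemma P_atom_ae_cover {A : set T} {B : nat -> set T} : P_atom P A ->
  (forall k, measurable (B k)) -> {ae P, forall w, A w -> exists k, B k w} ->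
  exists k, {ae P, forall w, A w -> B k w}.
Proof.
move=> [mA [PA_gt0 PA_atom]] mB AB; apply: contrapT => noB.
have PAB0 k : P (A `&` B k) = 0%E.
  case: (PA_atom _ (measurableI _ _ mA (mB k)) (@subIsetl _ _ _)) => // PAB.
  exfalso; apply: noB; exists k, (A `\` (A `&` B k)); split => //.
    by apply: measurableD => //; exact: measurableI.
  by move=> w /= /not_implyP[Aw nBw]; split => // -[].
have AnB : {ae P, forall w, forall k, ~ (A `&` B k) w}.
  by apply: ae_foralln => k; apply: ae_notin_null => //; exact: measurableI.
have : {ae P, forall w, A w -> set0 w}.
  apply: filterS2 AB AnB => w wB wAB Aw; have [k Bk] := wB Aw.
  exact: wAB k (conj Aw Bk).
by move/(ae_le_measure mA measurable0); rewrite measure0 leNgt PA_gt0.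
Qed.

Lemma P_atom_ae_bounded {A : set T} {h : T -> R} : P_atom P A ->
  measurable_fun setT h ->
  exists2 c : R, 0 <= c & {ae P, forall w, A w -> h w <= c}.
Proof.
move=> atomA mh.
have [k hk] : exists k, {ae P, forall w, A w -> h w <= k%:R}.
  apply: P_atom_ae_cover => //.
    by move=> k; apply: measurable_set_ler => //; exact: measurable_cst.
  apply: aeW => w _; exists (Num.truncn `|h w|).+1.
  exact: le_trans (ler_norm _) (ltW (truncnS_gt _)).
by exists k%:R.
Qed.

Lemma P_atom_ae_subset {A S : set T} : P_atom P A -> measurable S ->
  (P (~` S) < P A)%E -> {ae P, forall w, A w -> S w}.
Proof.
move=> [mA [_ PA_atom]] mS PSC_lt; have mAS := measurableI _ _ mA mS.
case: (PA_atom _ mAS (@subIsetl _ _ _)) => [PAS0|PAS].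
  have : (P A <= P (A `&` S) + P (~` S))%E.
    apply: le_trans (measureU2 _ _ _) => //; last exact: measurableC.
    apply: le_measure; rewrite ?inE //.
      by apply: measurableU => //; exact: measurableC.
    by move=> w Aw; case: (pselect (S w)) => Sw; [left|right].
  by rewrite PAS0 add0e leNgt PSC_lt.
exists (A `\` (A `&` S)); split => //; first exact: measurableD.
by move=> w /= /not_implyP[Aw nSw]; split => // -[].
Qed.

Lemma P_atom_fine_gt0 {A : set T} : P_atom P A -> 0 < fine (P A).
Proof.
move=> [mA [PA_gt0 _]]; apply: fine_gt0.
by rewrite PA_gt0 /= (le_lt_trans (probability_le1 P mA)) ?ltry.
Qed.

Lemma P_atom_ae_subset_large {A S : set T} {lam : R} : P_atom P A ->
  measurable S -> lam <= fine (P A) -> ((1 - lam)%:E < P S)%E ->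
  {ae P, forall w, A w -> S w}.
Proof.
move=> atomA mS lam_le PS_gt; apply: P_atom_ae_subset => //.
have [PS_fin PA_fin] := (fin_num_measure P _ mS, fin_num_measure P _ atomA.1).
rewrite probability_setC // -(fineK PS_fin) -(fineK PA_fin) -EFinB lte_fin.
by rewrite -(fineK PS_fin) lte_fin in PS_gt; lra.
Qed.

End atoms.

Section cover.
Context {d : measure_display} {T : measurableType d} {R : realType}.
Context (P : probability T R).

Lemma probability_bigcup_finite {S : set nat} {A : nat -> set T} {lam : R} :
  (forall n, S n -> measurable (A n)) -> \bigcup_(n in S) A n = setT ->
  0 < lam -> exists2 s : seq nat, (forall k, k \in s -> S k) &
    ((1 - lam)%:E < P (\bigcup_(k in [set` s]) A k))%E.
Proof.
move=> mA covA lam_gt0.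
pose U N := \bigcup_(k in [set k | S k /\ (k < N)%N]) A k.
have mU N : measurable (U N) by apply: bigcup_measurable => k [Sk _]; exact: mA.
have U_nd m n : (m <= n)%N -> U m `<=` U n.
  move=> mn w [k [Sk km] Ak]; exists k => //.
  by split => //; exact: leq_trans km mn.
have U_cover : \bigcup_n U n = setT.
  apply/seteqP; split => // w _.
  have [k Sk Ak] : (\bigcup_(n in S) A n) w by rewrite covA.
  by exists k.+1 => //; exists k.
have PU_cvg : P \o U @ \oo --> P setT.
  rewrite -U_cover; apply: nondecreasing_cvg_mu => //; first by rewrite U_cover.
  by move=> m n mn; apply/subsetPset; exact: U_nd.
have PU_nd : {homo P \o U : m n / (m <= n)%N >-> (m <= n)%E}.
  by move=> m n mn; apply: le_measure; rewrite ?inE //; exact: U_nd.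
have PU_sup : 1%E = ereal_sup (range (P \o U)).
  rewrite -(probability_setT P).
  exact: cvg_unique PU_cvg (ereal_nondecreasing_cvgn PU_nd).
have : ((1 - lam)%:E < ereal_sup (range (P \o U)))%E.
  by rewrite -PU_sup lte_fin; lra.
move/ereal_sup_gt => [_ [N _ <-] PUN].
exists [seq k <- iota 0 N | `[< S k >]] => [k|].
  by rewrite mem_filter => /andP[/asboolP].
rewrite (_ : [set` _] = [set k | S k /\ (k < N)%N]) //.
apply/seteqP; split => k /=; rewrite mem_filter mem_iota add0n.
  by move=> /andP[/asboolP Sk /= kN].
by move=> [Sk kN]; rewrite kN leq0n !andbT; apply/asboolP.
Qed.

End cover.

Section L0_dual.
Context (d : measure_display) (T : measurableType d) (R : realType).
Context (P : probability T R).
Context (K : comNzRingType) (kabs : K -> R) (kmeas : (T -> K) -> Prop).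
Context (ofR : R -> K).
Hypothesis kabsD : forall a b, kabs (a + b) <= kabs a + kabs b.
Hypothesis kabsM : forall r a, kabs (ofR r * a) = `|r| * kabs a.
Hypothesis kabs0 : kabs 0 = 0.
Hypothesis kabs1 : kabs 1 = 1.
Hypothesis kabs_ge0 : forall a, 0 <= kabs a.
Hypothesis kmeasB : forall f g, kmeas f -> kmeas g -> kmeas (f \- g).
Hypothesis kmeasR : forall g, measurable_fun setT g -> kmeas (ofR \o g).
Hypothesis kmeas_abs : forall h, kmeas h -> measurable_fun setT (kabs \o h).

Lemma kabsR r : kabs (ofR r) = `|r|.
Proof. by rewrite -[ofR r]mulr1 kabsM kabs1 mulr1. Qed.

Section module_hom.
Context {E : zmodType} {M : L0_module P kmeas E} {f : E -> T -> K}.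
Hypothesis homf : L0_module_hom M f.

Lemma L0_hom0 : {ae P, forall w, f 0 w = 0}.
Proof.
have [_ [fD _]] := homf; apply: filterS (fD 0 0) => w /=; rewrite addr0 => f0w.
by apply: (addrI (f 0 w)); rewrite addr0 -f0w.
Qed.

Lemma L0_hom_scaleR x {g : T -> R} : measurable_fun setT g ->
  {ae P, forall w, kabs (f (scale M (ofR \o g) x) w) = `|g w| * kabs (f x w)}.
Proof.
have [_ [_ fZ]] := homf => mg.
by apply: filterS (fZ _ x (kmeasR _ mg)) => w /= ->; rewrite kabsM.
Qed.

End module_hom.

Section seminorms.
Context (E : zmodType) (M : RLC_module P kabs kmeas E).

Lemma nrmQ_ge0 (Q : seq (rlc_idx M)) x w : 0 <= nrmQ Q x w.
Proof.
rewrite /nrmQ; elim: Q => [|i Q IH]; first by rewrite big_nil.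
by rewrite big_cons le_max IH orbT.
Qed.

Lemma measurable_nrmQ (Q : seq (rlc_idx M)) x : measurable_fun setT (nrmQ Q x).
Proof.
rewrite /nrmQ; elim: Q => [|i Q IH].
  by under eq_fun do rewrite big_nil; exact: measurable_cst.
under eq_fun do rewrite big_cons.
by apply: measurable_maxr => //; have [] := rlc_seminorm i.
Qed.

Lemma le_nrmQ_catl (Q1 Q2 : seq (rlc_idx M)) x w :
  nrmQ Q1 x w <= nrmQ (Q1 ++ Q2) x w.
Proof.
rewrite /nrmQ; elim: Q1 => [|i Q1 IH] /=; first by rewrite big_nil nrmQ_ge0.
by rewrite !big_cons ge_max !le_max lexx IH orbT.
Qed.

Lemma le_nrmQ_catr (Q1 Q2 : seq (rlc_idx M)) x w :
  nrmQ Q2 x w <= nrmQ (Q1 ++ Q2) x w.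
Proof.
elim: Q1 => [//|i Q1 IH] /=; rewrite /nrmQ big_cons.
by apply: le_trans IH _; rewrite le_max lexx orbT.
Qed.

Lemma le_nrmQ_flatten n (Q : 'I_n -> seq (rlc_idx M)) (r : seq 'I_n) i x w :
  i \in r -> nrmQ (Q i) x w <= nrmQ (flatten [seq Q j | j <- r]) x w.
Proof.
elim: r => [//|j r IH]; rewrite inE /= => /orP[/eqP->|ir].
  exact: le_nrmQ_catl.
exact: le_trans (IH ir) (le_nrmQ_catr _ _ _ _).
Qed.

Lemma nrmQ_scaleR (Q : seq (rlc_idx M)) x {g : T -> R} :
  measurable_fun setT g ->
  {ae P, forall w,
    nrmQ Q (scale (rlc_mod M) (ofR \o g) x) w = `|g w| * nrmQ Q x w}.
Proof.
move=> mg; rewrite /nrmQ; elim: Q => [|i Q IH].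
  by apply: aeW => w; rewrite !big_nil mulr0.
have [_ [_ [_ nrmZ]]] := rlc_seminorm i.
apply: filterS2 IH (nrmZ _ x (kmeasR _ mg)) => w IHw nrmZw.
by rewrite !big_cons IHw nrmZw /= kabsR maxr_pMr.
Qed.

Lemma atomic_bound_small_near0 {n : nat} {A : 'I_n -> set T}
    {xi : 'I_n -> T -> R} {eps0 : T -> R} (Q : 'I_n -> seq (rlc_idx M)) :
  (forall i, P_atom P (A i)) ->
  (forall i, measurable_fun setT (xi i) /\ ae_le P (fun _ => 0) (xi i)) ->
  measurable_fun setT eps0 -> {ae P, forall w, 0 < eps0 w} ->
  exists (Q' : seq (rlc_idx M)) (eps lam : R), [/\ 0 < eps, 0 < lam < 1 &
    forall y, ((1 - lam)%:E < P [set w | (nrmQ Q' y w < eps)%R])%E ->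
      ae_le P (fun w => \sum_(i < n) \1_(A i) w * xi i w * nrmQ (Q i) y w)
        eps0].
Proof.
move=> atomA xiP meps0 eps0_gt0.
have /choice[k k_bnd] i : exists c, 0 <= c /\
    {ae P, forall w, A i w -> xi i w / eps0 w <= c}.
  have mxi_eps0 : measurable_fun setT (fun w => xi i w / eps0 w).
    apply: measurable_funM; first exact: (xiP i).1.
    exact: measurableT_comp (@measurable_fun_inv R) meps0.
  by have [c c_ge0 hc] := P_atom_ae_bounded (atomA i) mxi_eps0; exists c.
have [lam /andP[lam_gt0 lam_lt1] lam_le] :=
  finite_pos_lbound (fun i => P_atom_fine_gt0 (atomA i)).
have k_ge0 : 0 <= \sum_i k i by apply: sumr_ge0 => i _; exact: (k_bnd i).1.
pose eps := (1 + \sum_i k i)^-1.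
have eps_gt0 : 0 < eps by rewrite invr_gt0; lra.
pose Q' := flatten [seq Q i | i <- enum 'I_n].
exists Q', eps, lam.
split => //; first by rewrite lam_gt0.
move=> y Py.
have mS : measurable [set w | nrmQ Q' y w < eps].
  by apply: measurable_set_ltr; [exact: measurable_nrmQ|exact: measurable_cst].
have y_small i : {ae P, forall w, A i w -> nrmQ (Q i) y w < eps}.
  apply: filterS (P_atom_ae_subset_large (atomA i) mS (lam_le i) Py).
  move=> w S_w Aw; apply: le_lt_trans (S_w Aw).
  by apply: le_nrmQ_flatten; rewrite mem_enum.
have all_ae : {ae P, forall w, 0 < eps0 w /\ forall i,
    [/\ A i w -> nrmQ (Q i) y w < eps, A i w -> xi i w / eps0 w <= k i
       & 0 <= xi i w]}.
  apply/near_andP; split => //; apply: filter_forall => i.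
  apply: filterS3 (y_small i) (k_bnd i).2 (xiP i).2 => w.
  by move=> ? ? ?; split.
apply: filterS all_ae => w [eps0w bnd].
have term_le i : \1_(A i) w * xi i w * nrmQ (Q i) y w <= k i * eps0 w * eps.
  have [y_lt xi_le xi_ge0] := bnd i.
  have [ki_ge0 _] := k_bnd i.
  rewrite indicE; case: (boolP (w \in A i)) => [/set_mem Aw|_]; last first.
    by rewrite !mul0r !mulr_ge0 // ltW.
  rewrite mul1r; apply: ler_pM => //; first exact: nrmQ_ge0.
    by rewrite -ler_pdivrMr // xi_le.
  exact: ltW (y_lt Aw).
apply: le_trans (ler_sum _ (fun i _ => term_le i)) _.
rewrite -!mulr_suml mulrAC ler_piMl //; first exact: ltW.
by rewrite /eps ler_pdivrMr; lra.
Qed.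

Lemma atomic_bound_dual_min (f : E -> T -> K) : L0_module_hom (rlc_mod M) f ->
  (exists (n : nat) (A : 'I_n -> set T) (xi : 'I_n -> T -> R)
          (Q : 'I_n -> seq (rlc_idx M)),
     (forall i, P_atom P (A i)) /\
     (forall i, measurable_fun setT (xi i) /\ ae_le P (fun _ => 0) (xi i)) /\
     forall x, ae_le P (fun w => kabs (f x w))
       (fun w => \sum_(i < n) \1_(A i) w * xi i w * nrmQ (Q i) x w)) ->
  in_dual_min M f.
Proof.
move=> homf [n [A [xi [Q [atomA [xiP f_bnd]]]]]] G G_open x Gfx.
have [kmf [fD _]] := homf.
have [eps0 [meps0 [eps0_gt0 G_ball]]] := G_open _ (kmf x) Gfx.
have [Q' [eps [lam [eps_gt0 lam01 small]]]] :=
  atomic_bound_small_near0 Q atomA xiP meps0 eps0_gt0.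
exists Q', eps, lam; split => //; split => // y Py /=.
have -> : f (x + y) = f x \+ (f (x + y) \- f x).
  by apply/funext => w /=; rewrite [RHS]addrC subrK.
apply: G_ball; first exact: kmeasB.
apply: filterS3 (fD x y) (f_bnd y) (small y Py) => w /= -> fy_le sum_le.
by rewrite addrAC subrr add0r; exact: le_trans fy_le sum_le.
Qed.

Lemma Tc_open_ball1 :
  Tc_open P kabs kmeas
    [set g | exists c : R, c < 1 /\ ae_le P (fun w => kabs (g w)) (fun _ => c)].
Proof.
move=> g _ [c [c_lt1 g_le]]; exists (fun _ => (1 - c) / 2).
split; first exact: measurable_cst.
split; first by apply: aeW => _; rewrite divr_gt0 // subr_gt0.
move=> h _ h_le; exists ((1 + c) / 2); split; first lra.
apply: filterS2 g_le h_le => w /= gw hw.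
by apply: le_trans (kabsD _ _) _; lra.
Qed.

Lemma dual_min_ball1 {f : E -> T -> K} : L0_module_hom (rlc_mod M) f ->
  in_dual_min M f -> exists (Q : seq (rlc_idx M)) (eps lam : R),
    [/\ 0 < eps, 0 < lam &
      forall y, ((1 - lam)%:E < P [set w | (nrmQ Q y w < eps)%R])%E ->
        {ae P, forall w, kabs (f y w) < 1}].
Proof.
move=> homf fmin.
have G0 : exists c : R, c < 1 /\ ae_le P (fun w => kabs (f 0 w)) (fun _ => c).
  exists 0; split => //.
  by apply: filterS (L0_hom0 homf) => w /= ->; rewrite kabs0.
have [Q [eps [lam [eps_gt0 [/andP[lam_gt0 _] ball]]]]] :=
  fmin _ Tc_open_ball1 0 G0.
exists Q, eps, lam; split => // y /ball; rewrite add0r => -[c [c_lt1 fy_le]].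
by apply: filterS fy_le => w /le_lt_trans; apply.
Qed.

Lemma ball1_ae_bound {f : E -> T -> K} (Q : seq (rlc_idx M)) {eps : R}
    {U : set T} :
  L0_module_hom (rlc_mod M) f -> 0 < eps -> measurable U ->
  (forall y, (P U <= P [set w | (nrmQ Q y w < eps)%R])%E ->
     {ae P, forall w, kabs (f y w) < 1}) ->
  forall x, ae_le P (fun w => kabs (f x w))
    (fun w => \1_U w * (2 / eps) * nrmQ Q x w).
Proof.
move=> homf eps_gt0 mU ball x; have [kmf _] := homf.
(* Off U the scaling is unconstrained, as P U alone already exceeds the
   threshold; the factor 2 / |f x| there forces f x = 0 off U. *)
pose g w := if (w \in U) && (0 < nrmQ Q x w) then eps / 2 / nrmQ Q x w
            else 2 / kabs (f x w).
have mg : measurable_fun setT g.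
  apply: measurable_fun_ifT.
  - apply: measurable_and; first exact: measurable_fun_mem.
    exact: measurable_fun_ltr (measurable_cst _) (measurable_nrmQ Q x).
  - apply: measurable_funM; first exact: measurable_cst.
    exact: measurableT_comp (@measurable_fun_inv R) (measurable_nrmQ Q x).
  - apply: measurable_funM; first exact: measurable_cst.
    exact: measurableT_comp (@measurable_fun_inv R) (kmeas_abs _ (kmf x)).
pose y := scale (rlc_mod M) (ofR \o g) x.
have y_small : {ae P, forall w, U w -> nrmQ Q y w < eps}.
  apply: filterS (nrmQ_scaleR Q x mg) => w /= -> Uw; rewrite /g mem_set //=.
  have [N_gt0|N_le0] := ltrP 0 (nrmQ Q x w).
    by rewrite ger0_norm ?divr_ge0 ?ltW // divfK ?gt_eqF //; lra.
  rewrite (_ : nrmQ Q x w = 0) ?mulr0 //.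
  by apply/eqP; rewrite eq_le N_le0 nrmQ_ge0.
have mS : measurable [set w | nrmQ Q y w < eps].
  by apply: measurable_set_ltr; [exact: measurable_nrmQ|exact: measurable_cst].
have fy_lt1 := ball y (ae_le_measure mU mS y_small).
apply: filterS2 fy_lt1 (L0_hom_scaleR homf x mg) => w fy_lt1w fyE.
move: fy_lt1w; rewrite /y fyE.
have rhs_ge0 : 0 <= \1_U w * (2 / eps) * nrmQ Q x w.
  apply: mulr_ge0; last exact: nrmQ_ge0.
  by rewrite indicE mulr_ge0 ?ler0n ?divr_ge0 // ltW.
rewrite /g; case: ifP => [/andP[/set_mem Uw N_gt0]|_] lt1.
  rewrite indicE mem_set // mul1r mulrAC ler_pdivlMr //.
  move: lt1; rewrite ger0_norm; last by rewrite !divr_ge0 // ltW.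
  by rewrite mulrAC ltr_pdivrMr // mul1r; lra.
have [-> //|fx_neq0] := eqVneq (kabs (f x w)) 0.
by move: lt1; rewrite ger0_norm ?divr_ge0 // divfK //; lra.
Qed.

Lemma dual_min_atomic_bound (f : E -> T -> K) : essentially_purely_atomic P ->
  L0_module_hom (rlc_mod M) f -> in_dual_min M f ->
  exists (n : nat) (A : 'I_n -> set T) (xi : 'I_n -> T -> R)
         (Q : 'I_n -> seq (rlc_idx M)),
    (forall i, P_atom P (A i)) /\
    (forall i, measurable_fun setT (xi i) /\ ae_le P (fun _ => 0) (xi i)) /\
    forall x, ae_le P (fun w => kabs (f x w))
      (fun w => \sum_(i < n) \1_(A i) w * xi i w * nrmQ (Q i) x w).
Proof.
move=> [S [A [atomA [_ [covA _]]]]] homf fmin.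
have [Q [eps [lam [eps_gt0 lam_gt0 ball]]]] := dual_min_ball1 homf fmin.
have [s sS PU] :=
  probability_bigcup_finite P (fun n Sn => (atomA n Sn).1) covA lam_gt0.
have mU : measurable (\bigcup_(k in [set` s]) A k).
  by apply: bigcup_measurable => k /sS /atomA[].
exists (size s), (fun i => A (nth 0 s i)), (fun _ _ => 2 / eps), (fun _ => Q).
split; first by move=> i; apply/atomA/sS/mem_nth.
split.
  move=> _; split; first exact: measurable_cst.
  by apply: aeW => _; rewrite divr_ge0 // ltW.
have ball_U y Py := ball y (lt_le_trans PU Py).
move=> x; have := ball1_ae_bound Q homf eps_gt0 mU ball_U x.
apply: filterS => w /le_trans; apply.
rewrite -!mulr_suml; apply: ler_wpM2r; first exact: nrmQ_ge0.
apply: ler_wpM2r; first by rewrite divr_ge0 // ltW.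
exact: indic_bigcup_le_sum.
Qed.

End seminorms.

Lemma dual_min_iff_atomic_bound : lemma3p7_stmt P kabs kmeas.
Proof.
move=> atomic E M f homf; split; first exact: dual_min_atomic_bound.
exact: atomic_bound_dual_min.
Qed.

End L0_dual.

Section scalar_fields.
Context {d : measure_display} {T : measurableType d} {R : realType}.
Context (P : probability T R).

Lemma dual_min_iff_atomic_bound_real :
  lemma3p7_stmt P (@Rabs_K R) (@Rmeas_K d T R).
Proof.
apply: (@dual_min_iff_atomic_bound _ _ _ P _ _ _ id).
- exact: ler_normD.
- exact: normrM.
- exact: normr0.
- exact: normr1.
- exact: normr_ge0.
- exact: measurable_funB.
- by [].
- by move=> h mh; exact: measurableT_comp (@normr_measurable R setT) mh.
Qed.

Lemma Cabs_KE (z : R[i]) : Cabs_K z = Normc.normc z.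
Proof. by case: z. Qed.

Lemma Cmeas_KB (f g : T -> R[i]) : Cmeas_K f -> Cmeas_K g -> Cmeas_K (f \- g).
Proof.
have ReB (a b : R[i]) : complex.Re (a - b) = complex.Re a - complex.Re b.
  by case: a; case: b.
have ImB (a b : R[i]) : complex.Im (a - b) = complex.Im a - complex.Im b.
  by case: a; case: b.
move=> [mf1 mf2] [mg1 mg2]; split => /=.
  by under eq_fun do rewrite ReB; exact: measurable_funB.
by under eq_fun do rewrite ImB; exact: measurable_funB.
Qed.

Lemma measurable_Cabs_K (h : T -> R[i]) : Cmeas_K h ->
  measurable_fun setT (@Cabs_K R \o h).
Proof.
move=> [mh1 mh2].
apply: measurableT_comp (continuous_measurable_fun (@sqrt_continuous R)) _.
by apply: measurable_funD; apply: measurable_funX.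
Qed.

Lemma dual_min_iff_atomic_bound_complex :
  lemma3p7_stmt P (@Cabs_K R) (@Cmeas_K d T R).
Proof.
apply: (@dual_min_iff_atomic_bound _ _ _ P _ _ _ (fun r => r%:C%C)).
- by move=> a b; rewrite !Cabs_KE; exact: le_normcD.
- move=> r a; rewrite !Cabs_KE Normc.normcM; congr (_ * _).
  by rewrite /Normc.normc /= expr0n /= addr0 sqrtr_sqr.
- by rewrite Cabs_KE Normc.normc0.
- by rewrite Cabs_KE Normc.normc1.
- by case=> a b; exact: sqrtr_ge0.
- exact: Cmeas_KB.
- by move=> g mg; split => //=; exact: measurable_cst.
- exact: measurable_Cabs_K.
Qed.

End scalar_fields.

Theorem lemma3p7 (d : measure_display) (T : measurableType d) (R : realType)
  (P : probability T R) :
  (* K = R *)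
  lemma3p7_stmt P (K := R) (@Rabs_K R) (@Rmeas_K d T R) /\
  (* K = C *)
  lemma3p7_stmt P (K := R[i]) (@Cabs_K R) (@Cmeas_K d T R).
Proof.
split; first exact: dual_min_iff_atomic_bound_real.
exact: dual_min_iff_atomic_bound_complex.
Qed.
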